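(* Let $G'$ be any orientation of a series-parallel graph $G$. Then $\chi'_o(G')\le 7$.
   Context: An orientation of an undirected graph replaces each edge $\{u,v\}$ by exactly one of the arcs $(u,v)$, $(v,u)$. An oriented $r$-arc-coloring of a digraph $G=(V,E)$ is a map $c:E\to\{1,\dots,r\}$ such that (i) $c((u,v))\ne c((v,w))$ for every two arcs $(u,v),(v,w)\in E$, and (ii) $c((u,v))\ne c((y,z))$ for all arcs $(u,v),(v,w),(x,y),(y,z)\in E$ with $c((v,w))=c((x,y))$; $\chi'_o(G)$ is the smallest such $r$. Two-terminal series-parallel multigraphs with terminals $(s,t)$ are defined recursively: a single edge $\{s,t\}$ with $s\ne t$ is one; if $(G_1,s_1,t_1),(G_2,s_2,t_2)$ are vertex-disjoint ones, then the parallel composition (identify $s_1$ with $s_2$ and $t_1$ with $t_2$) with terminals $(s_1,t_1)$, and the series composition (identify $t_1$ with $s_2$) with terminals $(s_1,t_2)$, are again ones. A (simple) graph is series-parallel if it is obtained from a two-terminal series-parallel multigraph by merging parallel edges. *)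

From mathcomp Require Import all_boot.
Set Implicit Arguments. Unset Strict Implicit. Unset Printing Implicit Defensive.

(* Two-terminal series-parallel multigraphs, with vertices labelled by
   natural numbers.  [sp V E s t]: vertex list V, edge list E (each edge an
   unordered pair stored as (u,v); repeated entries = parallel edges),
   terminals (s,t).  Vertex-disjointness of the two parts, followed by the
   identification of terminals, is expressed by requiring that the two
   vertex sets share exactly the identified vertices. *)
Inductive sp : seq nat -> seq (nat * nat) -> nat -> nat -> Prop :=
| sp_edge s t : s != t -> sp [:: s; t] [:: (s, t)] s t
| sp_par V1 E1 V2 E2 s t :
    sp V1 E1 s t -> sp V2 E2 s t ->
    (forall x, x \in V1 -> x \in V2 -> (x == s) || (x == t)) ->
    sp (V1 ++ [seq x <- V2 | x \notin V1]) (E1 ++ E2) s t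
| sp_ser V1 E1 V2 E2 s m t :
    sp V1 E1 s m -> sp V2 E2 m t ->
    (forall x, x \in V1 -> x \in V2 -> x == m) ->
    sp (V1 ++ [seq x <- V2 | x \notin V1]) (E1 ++ E2) s t.

(* A simple graph (T, e) (e symmetric, irreflexive) is series-parallel if it
   is isomorphic to the graph obtained from some two-terminal series-parallel
   multigraph by merging parallel edges. *)
Definition series_parallel (T : finType) (e : rel T) : Prop :=
  exists (V : seq nat) (E : seq (nat * nat)) (s t : nat) (f : T -> nat),
    [/\ sp V E s t, injective f, (forall v, v \in V -> exists x, f x = v),
        (forall x, f x \in V) &
        (forall x y, e x y <-> ((f x, f y) \in E \/ (f y, f x) \in E))].

Definition orientation (T : finType) (e : rel T) (a : rel T) : Prop :=
  forall x y, (a x y -> e x y) /\ (e x y -> (a x y && ~~ a y x) || (a y x && ~~ a x y)).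

(* Oriented r-arc-coloring of the digraph a; c is read only on arcs. *)
Definition oriented_arc_coloring (T : finType) (a : rel T) (r : nat)
    (c : T -> T -> 'I_r) : Prop :=
  (forall u v w, a u v -> a v w -> c u v != c v w) /\
  (forall u v w x y z, a u v -> a v w -> a x y -> a y z ->
     c v w = c x y -> c u v != c y z).

Definition oriented_chromatic_index_le (T : finType) (a : rel T) (r : nat) : Prop :=
  exists c : T -> T -> 'I_r, oriented_arc_coloring a c.

(* Every orientation of a series-parallel graph admits a homomorphism to the
   Paley tournament QR_7 on Z/7 (i -> j iff j - i is a nonzero square, i.e.
   one of 1, 2, 4).  QR_7 has the extension property that for any two distinct
   vertices a, b and any prescribed directions there is a third vertex c
   joined to a and to b in those directions.  Hence, by induction on the
   series-parallel decomposition, every precolouring of the terminals that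
   respects the arc between them (if any) extends to a homomorphism: parallel
   compositions are glued along the common terminals, and a series
   composition s-m-t gets its middle terminal coloured by such a c.
   Colouring every arc by the image of its tail then gives an oriented
   7-arc-colouring, because QR_7 has no pair of opposite arcs. *)
From mathcomp Require Import all_boot.

Set Implicit Arguments.
Unset Strict Implicit.
Unset Printing Implicit Defensive.

Definition asymmetric (T : Type) (r : rel T) := forall x y, r x y -> ~~ r y x.

Lemma hom_oriented_arc_coloring (T : finType) (a : rel T) (r : nat)
    (tgt : rel 'I_r) (phi : T -> 'I_r) :
  asymmetric tgt -> (forall x y, a x y -> tgt (phi x) (phi y)) ->
  oriented_arc_coloring a (fun u _ => phi u).
Proof.
move=> tgt_asym phi_hom; split.
  move=> u v w /phi_hom tuv _; apply/eqP=> eq_uv.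
  by move: tuv (tgt_asym _ _ tuv); rewrite eq_uv => ->.
move=> u v w x y z /phi_hom tuv _ /phi_hom txy _ eq_vx; apply/eqP=> eq_uy.
by move: (tgt_asym _ _ tuv); rewrite eq_vx eq_uy txy.
Qed.

Lemma asym_if_split (T U : Type) (A : rel T) (R : rel U) x y p q :
  asymmetric A -> (if A x y then R p q else R q p) ->
  (A x y -> R p q) /\ (A y x -> R q p).
Proof.
move=> A_asym; case Axy: (A x y) => r; split=> // Ayx.
by move: (A_asym _ _ Ayx); rewrite Axy.
Qed.

Lemma orientation_asym (T : finType) (e a : rel T) :
  orientation e a -> asymmetric a.
Proof.
move=> ori x y axy; have [/(_ axy) exy] := ori x y.
by move=> /(_ exy); rewrite axy andbF orbF.
Qed.

(* Adding 7 avoids truncated subtraction; only arguments below 7 are used. *)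
Definition qr7 (i j : nat) : bool := (j + 7 - i) %% 7 \in [:: 1; 2; 4].

Lemma all_iota_ord (n : nat) (p : pred nat) :
  all p (iota 0 n) -> forall i : 'I_n, p i.
Proof. by move=> /allP pn i; apply: pn; rewrite mem_iota ltn_ord. Qed.

Lemma has_iota_ord (n : nat) (p : pred nat) :
  has p (iota 0 n) -> exists i : 'I_n, p i.
Proof.
by case/hasP=> i; rewrite mem_iota => /andP[_ lt_in] pi; exists (Ordinal lt_in).
Qed.

Lemma qr7_asym : asymmetric (fun i j : 'I_7 => qr7 i j).
Proof.
have check : all (fun i => all (fun j => qr7 i j ==> ~~ qr7 j i) (iota 0 7))
                 (iota 0 7) by [].
by move=> i j; move: (all_iota_ord check i) => /all_iota_ord/(_ j)/implyP.
Qed.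

Lemma qr7_extend (a b : 'I_7) (d1 d2 : bool) : a != b ->
  exists c : 'I_7, [&& c != a, c != b,
    if d1 then qr7 a c else qr7 c a & if d2 then qr7 c b else qr7 b c].
Proof.
have check : all (fun a => all (fun b => (a != b) ==>
    all (fun d1 => all (fun d2 => has (fun c => [&& c != a, c != b,
        if d1 then qr7 a c else qr7 c a & if d2 then qr7 c b else qr7 b c])
      (iota 0 7)) [:: true; false]) [:: true; false])
    (iota 0 7)) (iota 0 7) by [].
have bools (d : bool) : d \in [:: true; false] by case: d.
move=> ab; move: check => /all_iota_ord/(_ a)/all_iota_ord/(_ b)/implyP/(_ ab).
by move=> /allP/(_ d1 (bools _))/allP/(_ d2 (bools _))/has_iota_ord[c]; exists c.
Qed.

Definition qr7_hom (E : seq (nat * nat)) (A : rel nat) (phi : nat -> 'I_7) :=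
  forall m n, (m, n) \in E ->
    (A m n -> qr7 (phi m) (phi n)) /\ (A n m -> qr7 (phi n) (phi m)).

Lemma qr7_hom_cat E1 E2 A phi :
  qr7_hom E1 A phi -> qr7_hom E2 A phi -> qr7_hom (E1 ++ E2) A phi.
Proof. by move=> hom1 hom2 m n; rewrite mem_cat => /orP[/hom1 | /hom2]. Qed.

Lemma mem_cat_filter (V1 V2 : seq nat) x :
  x \in V2 -> x \in V1 ++ [seq y <- V2 | y \notin V1].
Proof. by rewrite mem_cat mem_filter => ->; case: (x \in V1). Qed.

Lemma sp_mem V E s t : sp V E s t ->
  [/\ s \in V, t \in V & forall m n, (m, n) \in E -> (m \in V) && (n \in V)].
Proof.
elim=> {V E s t} [s t _ | V1 E1 V2 E2 s t _ [s1 t1 E1V1] _ [_ _ E2V2] _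
                        | V1 E1 V2 E2 s m t _ [s1 _ E1V1] _ [_ t2 E2V2] _].
- split; rewrite ?inE ?eqxx ?orbT // => m n.
  by rewrite mem_seq1 => /eqP[-> ->]; rewrite !inE !eqxx orbT.
- split; rewrite ?mem_cat ?s1 ?t1 // => m n; rewrite mem_cat.
  case/orP=> [/E1V1 | /E2V2] /andP[mV nV]; first by rewrite !mem_cat mV nV.
  by rewrite !mem_cat_filter.
- split; [by rewrite mem_cat s1 | exact: mem_cat_filter | move=> x y].
  rewrite mem_cat.
  case/orP=> [/E1V1 | /E2V2] /andP[xV yV]; first by rewrite !mem_cat xV yV.
  by rewrite !mem_cat_filter.
Qed.

Lemma qr7_hom_glue V1 E1 s1 t1 V2 E2 s2 t2 A (phi1 phi2 : nat -> 'I_7) :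
  sp V1 E1 s1 t1 -> sp V2 E2 s2 t2 -> qr7_hom E1 A phi1 -> qr7_hom E2 A phi2 ->
  {in V1, forall x, x \in V2 -> phi1 x = phi2 x} ->
  qr7_hom (E1 ++ E2) A (fun x => if x \in V1 then phi1 x else phi2 x).
Proof.
move=> /sp_mem[_ _ E1V1] /sp_mem[_ _ E2V2] hom1 hom2 agree.
apply: qr7_hom_cat => m n mnE; first by have /andP[-> ->] := E1V1 _ _ mnE; apply: hom1.
have /andP[mV2 nV2] := E2V2 _ _ mnE.
have phi2_V2 x : x \in V2 -> (if x \in V1 then phi1 x else phi2 x) = phi2 x.
  by move=> xV2; case: ifP => // xV1; apply: agree.
by rewrite !phi2_V2 //; apply: hom2.
Qed.

Definition qr7_extendable (E : seq (nat * nat)) (s t : nat) :=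
  forall A : rel nat, asymmetric A -> forall a b : 'I_7, a != b ->
    (A s t -> qr7 a b) -> (A t s -> qr7 b a) ->
  exists phi : nat -> 'I_7, [/\ phi s = a, phi t = b & qr7_hom E A phi].

Lemma qr7_extendable_edge s t : s != t -> qr7_extendable [:: (s, t)] s t.
Proof.
move=> st A _ a b _ hst hts; exists (fun x => if x == s then a else b).
rewrite eqxx eq_sym (negbTE st); split=> // m n.
by rewrite mem_seq1 => /eqP[-> ->]; rewrite eqxx eq_sym (negbTE st).
Qed.

Lemma qr7_extendable_par V1 E1 V2 E2 s t :
  sp V1 E1 s t -> sp V2 E2 s t ->
  (forall x, x \in V1 -> x \in V2 -> (x == s) || (x == t)) ->
  qr7_extendable E1 s t -> qr7_extendable E2 s t ->
  qr7_extendable (E1 ++ E2) s t.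
Proof.
move=> sp1 sp2 V1V2 ext1 ext2 A A_asym a b ab hst hts.
have [phi1 [s1 t1 hom1]] := ext1 A A_asym a b ab hst hts.
have [phi2 [s2 t2 hom2]] := ext2 A A_asym a b ab hst hts.
have [sV1 tV1 _] := sp_mem sp1.
exists (fun x => if x \in V1 then phi1 x else phi2 x); rewrite sV1 tV1.
split=> //; apply: qr7_hom_glue sp1 sp2 hom1 hom2 _ => x xV1 xV2.
by case/orP: (V1V2 x xV1 xV2) => /eqP->; rewrite ?s1 ?s2 ?t1 ?t2.
Qed.

Lemma qr7_extendable_ser V1 E1 V2 E2 s m t :
  sp V1 E1 s m -> sp V2 E2 m t ->
  (forall x, x \in V1 -> x \in V2 -> x == m) ->
  qr7_extendable E1 s m -> qr7_extendable E2 m t ->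
  qr7_extendable (E1 ++ E2) s t.
Proof.
move=> sp1 sp2 V1V2 ext1 ext2 A A_asym a b ab _ _.
have [c /and4P[ca cb hac hcb]] := qr7_extend (A s m) (A m t) ab.
have [hsm hms] := asym_if_split A_asym hac.
have [hmt htm] := asym_if_split A_asym hcb.
have ac : a != c by rewrite eq_sym.
have [phi1 [s1 m1 hom1]] := ext1 A A_asym a c ac hsm hms.
have [phi2 [m2 t2 hom2]] := ext2 A A_asym c b cb hmt htm.
have [sV1 _ _] := sp_mem sp1; have [_ tV2 _] := sp_mem sp2.
have agree : {in V1, forall x, x \in V2 -> phi1 x = phi2 x}.
  by move=> x xV1 xV2; rewrite (eqP (V1V2 x xV1 xV2)) m1 m2.
exists (fun x => if x \in V1 then phi1 x else phi2 x); rewrite sV1.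
split=> //; last exact: qr7_hom_glue sp1 sp2 hom1 hom2 agree.
by case: ifP => // /agree ->.
Qed.

Lemma sp_qr7_extendable V E s t : sp V E s t -> qr7_extendable E s t.
Proof.
elim=> {V E s t} [s t /qr7_extendable_edge //
  | V1 E1 V2 E2 s t sp1 ext1 sp2 ext2 V1V2 | V1 E1 V2 E2 s m t sp1 ext1 sp2 ext2 V1V2].
- exact: qr7_extendable_par sp1 sp2 V1V2 ext1 ext2.
- exact: qr7_extendable_ser sp1 sp2 V1V2 ext1 ext2.
Qed.

Definition image_rel (T : finType) (f : T -> nat) (a : rel T) : rel nat :=
  fun m n => [exists x, exists y, [&& f x == m, f y == n & a x y]].

Lemma image_relP (T : finType) (f : T -> nat) (a : rel T) x y :
  a x y -> image_rel f a (f x) (f y).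
Proof. by move=> axy; apply/existsP; exists x; apply/existsP; exists y; rewrite !eqxx. Qed.

Lemma image_rel_asym (T : finType) (f : T -> nat) (a : rel T) :
  injective f -> asymmetric a -> asymmetric (image_rel f a).
Proof.
move=> f_inj a_asym m n /existsP[x /existsP[y /and3P[/eqP fx /eqP fy axy]]].
apply/existsP=> -[y' /existsP[x' /and3P[/eqP fy' /eqP fx']]].
have -> : y' = y by apply: f_inj; rewrite fy' fy.
have -> : x' = x by apply: f_inj; rewrite fx' fx.
by rewrite (negbTE (a_asym _ _ axy)).
Qed.

Theorem mainTheorem13 (T : finType) (e : rel T) (a : rel T) :
  symmetric e -> irreflexive e -> series_parallel e -> orientation e a ->
  oriented_chromatic_index_le a 7.
Proof.
move=> _ _ [V [E [s [t [f [spG f_inj _ _ eE]]]]]] ori.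
set A := image_rel f a.
have A_asym : asymmetric A := image_rel_asym f_inj (orientation_asym ori).
pose o0 : 'I_7 := Ordinal (isT : 0 < 7); pose o1 : 'I_7 := Ordinal (isT : 1 < 7).
have [b /and4P[b0 _ h0b _]] := qr7_extend (A s t) true (isT : o0 != o1).
have [hst hts] := asym_if_split A_asym h0b.
have o0b : o0 != b by rewrite eq_sym.
have [phi [_ _ hom]] := sp_qr7_extendable spG A_asym o0b hst hts.
exists (fun u _ => phi (f u)); apply: hom_oriented_arc_coloring qr7_asym _.
move=> x y axy; have Afxy : A (f x) (f y) := image_relP f axy.
have [/(_ axy) exy _] := ori x y.
by case/eE: exy => /hom[hxy hyx]; [apply: hxy | apply: hyx].
Qed.
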